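(* Let $\zeta$ be the Riemann zeta function. For every non-negative integer $n$, $$\lim_{x\to 0^+}\frac{2\ln(n!\,x)+\ln|\Gamma(-n-x)|+\ln|\Gamma(-n+x)|}{x^2}=\zeta(2)+\sum_{k=1}^n\frac{1}{k^2}.$$
   Context: $\Gamma$ is Euler's Gamma function on the real line. *)

From Stdlib Require Import Reals Factorial.
From Coquelicot Require Import Coquelicot.
Open Scope R_scope.

Fixpoint gauss_prod (x : R) (m : nat) : R :=
  match m with
  | O => x
  | S m' => gauss_prod x m' * (x + INR m)
  end.

(* Euler's Gamma function on the real line, via the Euler--Gauss limit
   Gamma(x) = lim_{m -> oo} m! m^x / (x (x+1) ... (x+m)),
   valid for every real x that is not a non-positive integer. *)
Definition Gamma (x : R) : R :=
  real (Lim_seq (fun m => INR (Factorial.fact m) * exp (x * ln (INR m)) / gauss_prod x m)).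

Definition zeta2 : R := Series (fun k => / (INR (S k)) ^ 2).

Definition partial_zeta2 (n : nat) : R := sum_n_m (fun k => / (INR k) ^ 2) 1 n.

(* For 0 < x < 1, the recurrence Gamma(z + 1) = z Gamma(z) gives
   Gamma(-n + x) = Gamma(x) / p1 and Gamma(-n - x) = Gamma(1 - x) / p2 with
   p1 p2 = -x (n!)^2 prod_{k<=n} (1 - x^2/k^2).  On the Euler--Gauss sequences,
   x Gamma(x) Gamma(1 - x) is the inverse of prod_{k>=1} (1 - x^2/k^2).  Hence
   the numerator equals - sum_{k>=1} ln(1 - x^2/k^2) - sum_{k<=n} ln(1 - x^2/k^2),
   and t <= -ln(1 - t) <= t / (1 - x^2) for 0 < t <= x^2 squeezes it between
   x^2 L and x^2 L / (1 - x^2), where L = zeta(2) + sum_{k<=n} 1/k^2. *)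
From Stdlib Require Import Reals Factorial Lra Lia.
From Coquelicot Require Import Coquelicot.
Open Scope R_scope.

Lemma ln_le_sub_1 z : 0 < z -> ln z <= z - 1.
Proof.
  intros Hz. rewrite <- (ln_exp (z - 1)).
  apply ln_le; [exact Hz|]. pose proof (exp_ineq1_le (z - 1)). lra.
Qed.

Lemma ln_1p_le t : -1 < t -> ln (1 + t) <= t.
Proof. intros; pose proof (ln_le_sub_1 (1 + t)); lra. Qed.

Lemma ln_1p_ge t : -1 < t -> t / (1 + t) <= ln (1 + t).
Proof.
  intros Ht.
  pose proof (ln_le_sub_1 (/ (1 + t)) (Rinv_0_lt_compat (1 + t) ltac:(lra))) as H.
  rewrite ln_Rinv in H by lra.
  replace (t / (1 + t)) with (1 - / (1 + t)) by (field; lra). lra.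
Qed.

Lemma INR_S_ge_1 m : 1 <= INR (S m).
Proof. rewrite S_INR; pose proof (pos_INR m); lra. Qed.

Lemma is_lim_seq_1_plus_div_S c : is_lim_seq (fun m => 1 + c / INR (S m)) 1.
Proof.
  assert (Hinv : is_lim_seq (fun m => / INR (S m)) 0).
  { apply (is_lim_seq_incr_1 (fun m => / INR m)).
    exact (is_lim_seq_inv _ _ is_lim_seq_INR ltac:(discriminate)). }
  pose proof (is_lim_seq_plus' _ _ 1 (c * 0) (is_lim_seq_const 1)
                (is_lim_seq_scal_l _ c 0 Hinv)) as H.
  rewrite Rmult_0_r, Rplus_0_r in H. exact H.
Qed.

Lemma partial_zeta2_0 : partial_zeta2 0 = 0.
Proof. unfold partial_zeta2. rewrite sum_n_m_zero by lia. reflexivity. Qed.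

Lemma partial_zeta2_S n : partial_zeta2 (S n) = partial_zeta2 n + / INR (S n) ^ 2.
Proof. unfold partial_zeta2. rewrite sum_n_Sm by lia. reflexivity. Qed.

Lemma partial_zeta2_incr n : partial_zeta2 n <= partial_zeta2 (S n).
Proof.
  rewrite partial_zeta2_S.
  assert (0 < / INR (S n) ^ 2) by (apply Rinv_0_lt_compat, pow_lt, lt_0_INR; lia).
  lra.
Qed.

(* Telescoping: 1/(K+1)^2 <= 1/K - 1/(K+1). *)
Lemma partial_zeta2_S_le m : partial_zeta2 (S m) <= 2 - / INR (S m).
Proof.
  induction m as [|m IH].
  - rewrite partial_zeta2_S, partial_zeta2_0. simpl. lra.
  - rewrite partial_zeta2_S, (S_INR (S m)).
    pose proof (INR_S_ge_1 m) as HK.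
    assert (/ (INR (S m) + 1) ^ 2 <= / INR (S m) - / (INR (S m) + 1)).
    { replace (/ INR (S m) - / (INR (S m) + 1)) with (/ (INR (S m) * (INR (S m) + 1)))
        by (field; lra).
      apply Rinv_le_contravar; nra. }
    lra.
Qed.

Lemma partial_zeta2_le_2 n : partial_zeta2 n <= 2.
Proof.
  destruct n as [|m]; [rewrite partial_zeta2_0; lra|].
  pose proof (partial_zeta2_S_le m).
  assert (0 < / INR (S m)) by (apply Rinv_0_lt_compat, lt_0_INR; lia).
  lra.
Qed.

Lemma is_lim_seq_partial_zeta2 : is_lim_seq partial_zeta2 zeta2.
Proof.
  assert (Hsum : forall m, sum_n (fun k => / INR (S k) ^ 2) m = partial_zeta2 (S m)).
  { intros m. exact (sum_n_m_S (fun k => / INR k ^ 2) 0 m). }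
  assert (ex_finite_lim_seq (fun m => partial_zeta2 (S m))) as [l Hl].
  { apply ex_finite_lim_seq_incr with (M := 2);
      intros; [apply partial_zeta2_incr | apply partial_zeta2_le_2]. }
  replace zeta2 with l; [now apply is_lim_seq_incr_1|]. symmetry.
  apply is_series_unique. eapply filterlim_ext; [|exact Hl]. intros m. now rewrite Hsum.
Qed.

Definition euler_seq (z : R) (m : nat) : R :=
  INR (fact m) * exp (z * ln (INR m)) / gauss_prod z m.

Definition nonpole (z : R) : Prop := forall k : nat, z + INR k <> 0.

Lemma nonpole_neq_0 z : nonpole z -> z <> 0.
Proof. intros H. specialize (H 0%nat). simpl in H. lra. Qed.

Lemma nonpole_succ z : nonpole z -> nonpole (z + 1).
Proof. intros H k. specialize (H (S k)). rewrite S_INR in H. lra. Qed.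

Lemma gauss_prod_pos z m : 0 < z -> 0 < gauss_prod z m.
Proof.
  intros Hz; induction m as [|m IH]; [exact Hz|].
  cbn [gauss_prod]. pose proof (pos_INR (S m)). apply Rmult_lt_0_compat; lra.
Qed.

Lemma gauss_prod_neq_0 z m : nonpole z -> gauss_prod z m <> 0.
Proof.
  intros H; induction m as [|m IH].
  - exact (nonpole_neq_0 z H).
  - apply Rmult_integral_contrapositive_currified; [exact IH | apply H].
Qed.

Lemma gauss_prod_succ z m : gauss_prod (z + 1) m * z = gauss_prod z m * (z + INR (S m)).
Proof.
  induction m as [|m IH].
  - simpl. ring.
  - cbn [gauss_prod].
    transitivity (gauss_prod (z + 1) m * z * (z + 1 + INR (S m))); [ring|].
    rewrite IH, (S_INR (S m)). ring.
Qed.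

Lemma euler_seq_pos z m : 0 < z -> 0 < euler_seq z m.
Proof.
  intros Hz. unfold euler_seq, Rdiv.
  apply Rmult_lt_0_compat; [apply Rmult_lt_0_compat|].
  - apply lt_0_INR, lt_O_fact.
  - apply exp_pos.
  - apply Rinv_0_lt_compat, gauss_prod_pos, Hz.
Qed.

Lemma euler_seq_S z m : 0 < z ->
  euler_seq z (S m) =
  euler_seq z m * (INR (S m) * exp (z * (ln (INR (S m)) - ln (INR m))) / (z + INR (S m))).
Proof.
  intros Hz. unfold euler_seq.
  change (fact (S m)) with (S m * fact m)%nat. rewrite mult_INR.
  cbn [gauss_prod].
  replace (z * ln (INR (S m))) with (z * ln (INR m) + z * (ln (INR (S m)) - ln (INR m))) by ring.
  rewrite exp_plus.
  pose proof (gauss_prod_pos z m Hz). pose proof (pos_INR (S m)).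
  field; lra.
Qed.

(* From t/(1+t) <= ln(1+t) <= t applied to t = 1/K and t = z/(K+1). *)
Lemma ln_euler_ratio_bounds z K : 0 < z <= 1 -> 1 <= K ->
  0 <= ln ((K + 1) * exp (z * (ln (K + 1) - ln K)) / (z + (K + 1))) <= 2 / K ^ 2.
Proof.
  intros Hz HK.
  assert (HKinv : 0 < / K) by (apply Rinv_0_lt_compat; lra).
  assert (Hratio : ln ((K + 1) * exp (z * (ln (K + 1) - ln K)) / (z + (K + 1)))
                   = z * ln (1 + / K) - ln (1 + z / (K + 1))).
  { rewrite ln_div, ln_mult, ln_exp by (try apply Rmult_lt_0_compat; try apply exp_pos; lra).
    replace (1 + / K) with ((K + 1) / K) by (field; lra).
    replace (1 + z / (K + 1)) with ((z + (K + 1)) / (K + 1)) by (field; lra).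
    rewrite !ln_div by lra. ring. }
  rewrite Hratio.
  assert (HzK : 0 <= z / (K + 1)) by (apply Rdiv_le_0_compat; lra).
  pose proof (ln_1p_le (/ K) ltac:(lra)) as A1.
  pose proof (ln_1p_ge (/ K) ltac:(lra)) as A2.
  pose proof (ln_1p_le (z / (K + 1)) ltac:(lra)) as B1.
  pose proof (ln_1p_ge (z / (K + 1)) ltac:(lra)) as B2.
  replace (/ K / (1 + / K)) with (/ (K + 1)) in A2 by (field; lra).
  replace (z / (K + 1) / (1 + z / (K + 1))) with (z / (K + 1 + z)) in B2 by (field; lra).
  split.
  - assert (z * / (K + 1) <= z * ln (1 + / K)) by (apply Rmult_le_compat_l; lra).
    unfold Rdiv in B1. lra.
  - assert (z * ln (1 + / K) <= z * / K) by (apply Rmult_le_compat_l; lra).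
    assert (z * / K - z / (K + 1 + z) <= 2 / K ^ 2).
    { replace (z * / K - z / (K + 1 + z)) with (z * (1 + z) / (K * (K + 1 + z))) by (field; lra).
      unfold Rdiv. apply Rmult_le_compat; try nra.
      - left. apply Rinv_0_lt_compat. nra.
      - apply Rinv_le_contravar; nra. }
    lra.
Qed.

Lemma ex_lim_euler_seq z : 0 < z <= 1 -> exists g, 0 < g /\ is_lim_seq (euler_seq z) g.
Proof.
  intros Hz.
  set (u := fun m => ln (euler_seq z (S m))).
  assert (Hstep : forall m, u m <= u (S m) <= u m + 2 / INR (S m) ^ 2).
  { intros m. unfold u.
    pose proof (INR_S_ge_1 m).
    rewrite (euler_seq_S z (S m)), (S_INR (S m)) by lra.
    rewrite ln_mult.
    2: apply euler_seq_pos; lra.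
    2: apply Rdiv_lt_0_compat; [apply Rmult_lt_0_compat; [lra | apply exp_pos] | lra].
    pose proof (ln_euler_ratio_bounds z (INR (S m)) Hz ltac:(lra)). lra. }
  assert (Hbound : forall m, u m <= u 0%nat + 2 * partial_zeta2 m).
  { induction m as [|m IH]; [rewrite partial_zeta2_0; lra|].
    rewrite partial_zeta2_S. pose proof (Hstep m). unfold Rdiv in *. lra. }
  assert (ex_finite_lim_seq u) as [l Hl].
  { apply ex_finite_lim_seq_incr with (M := u 0%nat + 4).
    - intros m; apply Hstep.
    - intros m. pose proof (Hbound m). pose proof (partial_zeta2_le_2 m). lra. }
  exists (exp l). split; [apply exp_pos|].
  apply is_lim_seq_incr_1.
  apply is_lim_seq_ext with (fun m => exp (u m)).
  { intros m. apply exp_ln, euler_seq_pos. lra. }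
  apply is_lim_seq_continuous; [apply continuity_pt_filterlim, continuous_exp | exact Hl].
Qed.

Lemma is_lim_euler_seq_Gamma z : 0 < z <= 1 ->
  is_lim_seq (euler_seq z) (Gamma z) /\ 0 < Gamma z.
Proof.
  intros Hz. destruct (ex_lim_euler_seq z Hz) as [g [Hg Hlim]].
  assert (Gamma z = g) as ->.
  { unfold Gamma. fold (euler_seq z). now rewrite (is_lim_seq_unique _ _ Hlim). }
  now split.
Qed.

Lemma euler_seq_pred z m : nonpole z ->
  euler_seq z (S m) = euler_seq (z + 1) (S m) / z * (1 + (z + 1) / INR (S m)).
Proof.
  intros H. unfold euler_seq.
  pose proof (INR_S_ge_1 m) as HM.
  replace ((z + 1) * ln (INR (S m))) with (z * ln (INR (S m)) + ln (INR (S m))) by ring.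
  rewrite exp_plus, exp_ln by lra.
  pose proof (nonpole_neq_0 z H) as Hz.
  pose proof (gauss_prod_neq_0 z (S m) H).
  pose proof (H (S (S m))) as HN.
  assert (Hsucc : gauss_prod (z + 1) (S m) = gauss_prod z (S m) * (z + INR (S (S m))) / z).
  { rewrite <- gauss_prod_succ. field. exact Hz. }
  rewrite Hsucc, (S_INR (S m)) in *.
  field. repeat split; lra.
Qed.

Lemma is_lim_euler_seq_pred z (L : R) : nonpole z ->
  is_lim_seq (euler_seq (z + 1)) L -> is_lim_seq (euler_seq z) (L / z).
Proof.
  intros H HL. apply is_lim_seq_incr_1.
  apply is_lim_seq_ext with (fun m => euler_seq (z + 1) (S m) / z * (1 + (z + 1) / INR (S m))).
  { intros m. symmetry. apply euler_seq_pred, H. }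
  replace (L / z) with (L / z * 1) by ring.
  apply is_lim_seq_mult'; [|apply is_lim_seq_1_plus_div_S].
  apply (is_lim_seq_scal_r _ (/ z) L). now apply (is_lim_seq_incr_1 (euler_seq (z + 1))).
Qed.

Fixpoint pochhammer (z : R) (n : nat) : R :=
  match n with
  | O => 1
  | S n' => z * pochhammer (z + 1) n'
  end.

Lemma pochhammer_neq_0 n : forall z, nonpole z -> pochhammer z n <> 0.
Proof.
  induction n as [|n IH]; intros z H; simpl; [lra|].
  apply Rmult_integral_contrapositive_currified.
  - exact (nonpole_neq_0 z H).
  - apply IH, nonpole_succ, H.
Qed.

Lemma is_lim_euler_seq_shift n : forall z (L : R), nonpole z ->
  is_lim_seq (euler_seq (z + INR n)) L -> is_lim_seq (euler_seq z) (L / pochhammer z n).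
Proof.
  induction n as [|n IH]; intros z L H HL; simpl pochhammer.
  - rewrite Rplus_0_r in HL. now replace (L / 1) with L by field.
  - pose proof (nonpole_succ z H) as H1.
    replace (L / (z * pochhammer (z + 1) n)) with (L / pochhammer (z + 1) n / z)
      by (field; split; [apply pochhammer_neq_0 | apply nonpole_neq_0]; assumption).
    apply is_lim_euler_seq_pred, IH; [exact H | exact H1|].
    now replace (z + 1 + INR n) with (z + INR (S n)) by (rewrite S_INR; ring).
Qed.

Lemma Gamma_shift n z : nonpole z -> 0 < z + INR n <= 1 ->
  Gamma z = Gamma (z + INR n) / pochhammer z n.
Proof.
  intros H Hzn.
  destruct (is_lim_euler_seq_Gamma (z + INR n) Hzn) as [Hlim _].
  unfold Gamma at 1. fold (euler_seq z).
  now rewrite (is_lim_seq_unique _ _ (is_lim_euler_seq_shift n z _ H Hlim)).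
Qed.

(* Partial products of the Euler product of sin (pi x) / (pi x). *)
Fixpoint sin_prod (x : R) (m : nat) : R :=
  match m with
  | O => 1
  | S m' => sin_prod x m' * (1 - x ^ 2 / INR m ^ 2)
  end.

Lemma pochhammer_reflect n x :
  pochhammer (- INR n + x) n * pochhammer (- INR n - x) (S n)
  = - x * INR (fact n) ^ 2 * sin_prod x n.
Proof.
  induction n as [|n IH]; [simpl; ring|].
  change (pochhammer (- INR (S n) + x) (S n))
    with ((- INR (S n) + x) * pochhammer (- INR (S n) + x + 1) n).
  change (pochhammer (- INR (S n) - x) (S (S n)))
    with ((- INR (S n) - x) * pochhammer (- INR (S n) - x + 1) (S n)).
  cbn [sin_prod].
  replace (- INR (S n) + x + 1) with (- INR n + x) by (rewrite S_INR; ring).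
  replace (- INR (S n) - x + 1) with (- INR n - x) by (rewrite S_INR; ring).
  change (fact (S n)) with (S n * fact n)%nat. rewrite mult_INR.
  transitivity ((- INR (S n) + x) * (- INR (S n) - x)
                * (pochhammer (- INR n + x) n * pochhammer (- INR n - x) (S n))); [ring|].
  rewrite IH. pose proof (INR_S_ge_1 n). field. lra.
Qed.

Lemma gauss_prod_reflect x m :
  gauss_prod x m * gauss_prod (1 - x) m = x * (INR m + 1 - x) * INR (fact m) ^ 2 * sin_prod x m.
Proof.
  induction m as [|m IH]; [simpl; ring|].
  cbn [gauss_prod sin_prod].
  change (fact (S m)) with (S m * fact m)%nat. rewrite mult_INR.
  transitivity (gauss_prod x m * gauss_prod (1 - x) m
                * ((x + INR (S m)) * (1 - x + INR (S m)))); [ring|].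
  rewrite IH. pose proof (INR_S_ge_1 m). rewrite S_INR in *. field. lra.
Qed.

Lemma sin_prod_factor_bounds x m : 0 < x < 1 ->
  0 < x ^ 2 / INR (S m) ^ 2 <= x ^ 2 /\ x ^ 2 < 1.
Proof.
  intros Hx. pose proof (INR_S_ge_1 m).
  assert (1 <= INR (S m) ^ 2) by nra.
  split; [split|nra].
  - apply Rdiv_lt_0_compat; nra.
  - unfold Rdiv. rewrite <- (Rmult_1_r (x ^ 2)) at 2.
    apply Rmult_le_compat_l; [nra|].
    rewrite <- Rinv_1. apply Rinv_le_contravar; lra.
Qed.

Lemma sin_prod_pos x m : 0 < x < 1 -> 0 < sin_prod x m.
Proof.
  intros Hx; induction m as [|m IH]; cbn [sin_prod]; [lra|].
  destruct (sin_prod_factor_bounds x m Hx). apply Rmult_lt_0_compat; lra.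
Qed.

(* Each factor 1 - t, with 0 < t <= x^2, has  t <= -ln (1 - t) <= t / (1 - x^2). *)
Lemma neg_ln_sin_prod_bounds x m : 0 < x < 1 ->
  x ^ 2 * partial_zeta2 m <= - ln (sin_prod x m) <= x ^ 2 / (1 - x ^ 2) * partial_zeta2 m.
Proof.
  intros Hx; induction m as [|m IH].
  - simpl. rewrite ln_1, partial_zeta2_0. lra.
  - cbn [sin_prod]. rewrite partial_zeta2_S.
    destruct (sin_prod_factor_bounds x m Hx) as [[Ht0 Htx] Hx2].
    rewrite ln_mult by (try apply sin_prod_pos; lra).
    replace (x ^ 2 * (partial_zeta2 m + / INR (S m) ^ 2))
      with (x ^ 2 * partial_zeta2 m + x ^ 2 / INR (S m) ^ 2) by (unfold Rdiv; ring).
    replace (x ^ 2 / (1 - x ^ 2) * (partial_zeta2 m + / INR (S m) ^ 2))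
      with (x ^ 2 / (1 - x ^ 2) * partial_zeta2 m + x ^ 2 / INR (S m) ^ 2 / (1 - x ^ 2))
      by (unfold Rdiv; ring).
    set (t := x ^ 2 / INR (S m) ^ 2) in *.
    pose proof (ln_1p_le (- t) ltac:(lra)) as U.
    pose proof (ln_1p_ge (- t) ltac:(lra)) as L.
    replace (1 + - t) with (1 - t) in U, L by ring.
    replace (- t / (1 - t)) with (- (t / (1 - t))) in L by (field; lra).
    assert (t / (1 - t) <= t / (1 - x ^ 2)).
    { apply Rmult_le_compat_l; [lra|]. apply Rinv_le_contravar; lra. }
    lra.
Qed.

(* Finite form of Euler's reflection formula. *)
Lemma euler_seq_reflect x m : 0 < x < 1 ->
  x * euler_seq x (S m) * euler_seq (1 - x) (S m)
  = / ((1 + (1 - x) / INR (S m)) * sin_prod x (S m)).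
Proof.
  intros Hx. unfold euler_seq.
  pose proof (INR_S_ge_1 m).
  pose proof (sin_prod_pos x (S m) Hx).
  pose proof (gauss_prod_pos x (S m) ltac:(lra)).
  pose proof (gauss_prod_pos (1 - x) (S m) ltac:(lra)).
  pose proof (lt_0_INR _ (lt_O_fact (S m))).
  transitivity (x * INR (fact (S m)) ^ 2 * exp (x * ln (INR (S m)) + (1 - x) * ln (INR (S m)))
                / (gauss_prod x (S m) * gauss_prod (1 - x) (S m))).
  { rewrite exp_plus. field. lra. }
  replace (x * ln (INR (S m)) + (1 - x) * ln (INR (S m))) with (ln (INR (S m))) by ring.
  rewrite exp_ln, gauss_prod_reflect by lra.
  field. repeat split; lra.
Qed.

Lemma is_lim_neg_ln_sin_prod x : 0 < x < 1 ->
  is_lim_seq (fun m => - ln (sin_prod x m)) (ln (x * Gamma x * Gamma (1 - x))).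
Proof.
  intros Hx.
  destruct (is_lim_euler_seq_Gamma x ltac:(lra)) as [H1 Hg1].
  destruct (is_lim_euler_seq_Gamma (1 - x) ltac:(lra)) as [H2 Hg2].
  assert (Hprod : is_lim_seq (fun m => x * euler_seq x (S m) * euler_seq (1 - x) (S m))
                             (x * Gamma x * Gamma (1 - x))).
  { apply is_lim_seq_mult'; [apply (is_lim_seq_scal_l _ x (Gamma x))|].
    - now apply (is_lim_seq_incr_1 (euler_seq x)).
    - now apply (is_lim_seq_incr_1 (euler_seq (1 - x))). }
  assert (Hcorr : is_lim_seq (fun m => ln (1 + (1 - x) / INR (S m))) 0).
  { rewrite <- ln_1. apply is_lim_seq_continuous; [|apply is_lim_seq_1_plus_div_S].
    apply continuity_pt_filterlim, continuous_ln. lra. }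
  apply is_lim_seq_incr_1.
  rewrite <- (Rplus_0_r (ln _)).
  apply is_lim_seq_ext with (fun m => ln (x * euler_seq x (S m) * euler_seq (1 - x) (S m))
                                      + ln (1 + (1 - x) / INR (S m))).
  { intros m.
    pose proof (sin_prod_pos x (S m) Hx).
    assert (0 < 1 + (1 - x) / INR (S m)).
    { pose proof (INR_S_ge_1 m).
      assert (0 <= (1 - x) / INR (S m)) by (apply Rdiv_le_0_compat; lra). lra. }
    rewrite euler_seq_reflect, ln_Rinv, ln_mult
      by first [assumption | apply Rmult_lt_0_compat; assumption].
    ring. }
  apply is_lim_seq_plus'; [|exact Hcorr].
  apply is_lim_seq_continuous; [|exact Hprod].
  apply continuity_pt_filterlim, continuous_ln.
  apply Rmult_lt_0_compat; [apply Rmult_lt_0_compat|]; lra.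
Qed.

Lemma ln_Gamma_reflect_bounds x : 0 < x < 1 ->
  x ^ 2 * zeta2 <= ln (x * Gamma x * Gamma (1 - x)) <= x ^ 2 / (1 - x ^ 2) * zeta2.
Proof.
  intros Hx.
  pose proof (is_lim_neg_ln_sin_prod x Hx) as Hneg.
  split.
  - apply (is_lim_seq_le (fun m => x ^ 2 * partial_zeta2 m) (fun m => - ln (sin_prod x m))
                         (x ^ 2 * zeta2) (ln (x * Gamma x * Gamma (1 - x)))).
    + intros m. apply neg_ln_sin_prod_bounds, Hx.
    + exact (is_lim_seq_scal_l _ _ zeta2 is_lim_seq_partial_zeta2).
    + exact Hneg.
  - apply (is_lim_seq_le (fun m => - ln (sin_prod x m))
                         (fun m => x ^ 2 / (1 - x ^ 2) * partial_zeta2 m)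
                         (ln (x * Gamma x * Gamma (1 - x))) (x ^ 2 / (1 - x ^ 2) * zeta2)).
    + intros m. apply neg_ln_sin_prod_bounds, Hx.
    + exact Hneg.
    + exact (is_lim_seq_scal_l _ _ zeta2 is_lim_seq_partial_zeta2).
Qed.

Lemma nonpole_opp_INR_add n x : 0 < x < 1 -> nonpole (- INR n + x).
Proof.
  intros Hx k. destruct (Compare_dec.le_lt_dec n k) as [Hk|Hk].
  - apply le_INR in Hk. lra.
  - apply (le_INR (S k)) in Hk. rewrite S_INR in Hk. lra.
Qed.

Lemma nonpole_opp_INR_sub n x : 0 < x < 1 -> nonpole (- INR n - x).
Proof.
  intros Hx k. destruct (Compare_dec.le_lt_dec k n) as [Hk|Hk].
  - apply le_INR in Hk. lra.
  - apply (le_INR (S n)) in Hk. rewrite S_INR in Hk. lra.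
Qed.

Definition ln_Gamma_pair (n : nat) (x : R) : R :=
  2 * ln (INR (fact n) * x) + ln (Rabs (Gamma (- INR n - x))) + ln (Rabs (Gamma (- INR n + x))).

Lemma ln_Gamma_pair_eq n x : 0 < x < 1 ->
  ln_Gamma_pair n x = ln (x * Gamma x * Gamma (1 - x)) - ln (sin_prod x n).
Proof.
  intros Hx. unfold ln_Gamma_pair.
  destruct (is_lim_euler_seq_Gamma x ltac:(lra)) as [_ Hg1].
  destruct (is_lim_euler_seq_Gamma (1 - x) ltac:(lra)) as [_ Hg2].
  pose proof (nonpole_opp_INR_add n x Hx) as Hz1.
  pose proof (nonpole_opp_INR_sub n x Hx) as Hz2.
  rewrite (Gamma_shift n (- INR n + x)), (Gamma_shift (S n) (- INR n - x))
    by (auto; rewrite ?S_INR; lra).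
  replace (- INR n + x + INR n) with x by ring.
  replace (- INR n - x + INR (S n)) with (1 - x) by (rewrite S_INR; ring).
  pose proof (pochhammer_reflect n x) as HP.
  pose proof (pochhammer_neq_0 n _ Hz1).
  pose proof (pochhammer_neq_0 (S n) _ Hz2).
  set (p1 := pochhammer (- INR n + x) n) in *.
  set (p2 := pochhammer (- INR n - x) (S n)) in *.
  set (f := INR (fact n)) in *.
  assert (Hf : 0 < f) by apply lt_0_INR, lt_O_fact.
  pose proof (sin_prod_pos x n Hx) as HS.
  assert (Hp : ln (Rabs p1) + ln (Rabs p2) = ln x + 2 * ln f + ln (sin_prod x n)).
  { rewrite <- ln_mult, <- Rabs_mult, HP by (apply Rabs_pos_lt; assumption).
    replace (- x * f ^ 2 * sin_prod x n) with (- (x * (f * f) * sin_prod x n)) by ring.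
    rewrite Rabs_Ropp, Rabs_pos_eq by (left; repeat apply Rmult_lt_0_compat; lra).
    rewrite !ln_mult by (repeat apply Rmult_lt_0_compat; lra).
    ring. }
  rewrite !Rabs_div, (Rabs_pos_eq (Gamma x)), (Rabs_pos_eq (Gamma (1 - x))) by lra.
  rewrite !ln_div, !ln_mult by (try apply Rabs_pos_lt; try apply Rmult_lt_0_compat; lra).
  lra.
Qed.

Lemma ln_Gamma_pair_bounds n x : 0 < x < 1 ->
  x ^ 2 * (zeta2 + partial_zeta2 n) <= ln_Gamma_pair n x
  <= x ^ 2 * ((zeta2 + partial_zeta2 n) / (1 - x ^ 2)).
Proof.
  intros Hx. rewrite ln_Gamma_pair_eq by exact Hx.
  pose proof (ln_Gamma_reflect_bounds x Hx).
  pose proof (neg_ln_sin_prod_bounds x n Hx).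
  assert (0 < 1 - x ^ 2) by nra.
  replace (x ^ 2 * ((zeta2 + partial_zeta2 n) / (1 - x ^ 2)))
    with (x ^ 2 / (1 - x ^ 2) * zeta2 + x ^ 2 / (1 - x ^ 2) * partial_zeta2 n) by (field; lra).
  lra.
Qed.

Lemma filterlim_div_1_sub_sqr (L : R) :
  filterlim (fun x => L / (1 - x ^ 2)) (at_right 0) (locally L).
Proof.
  eapply filterlim_filter_le_1; [apply filter_le_within|].
  assert (Hc : continuous (fun x => L / (1 - x ^ 2)) 0)
    by (apply (@ex_derive_continuous R_AbsRing R_NormedModule); auto_derive; simpl; lra).
  unfold continuous in Hc. now replace (L / (1 - 0 ^ 2)) with L in Hc by (simpl; field).
Qed.

Theorem mainTheorem4 (n : nat) :
  filterlim
    (fun x : R =>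
       (2 * ln (INR (Factorial.fact n) * x) + ln (Rabs (Gamma (- INR n - x)))
          + ln (Rabs (Gamma (- INR n + x)))) / x ^ 2)
    (at_right 0)
    (locally (zeta2 + partial_zeta2 n)).
Proof.
  set (L := zeta2 + partial_zeta2 n).
  apply (filterlim_le_le (fun _ => L) _ (fun x => L / (1 - x ^ 2)) L).
  - exists (mkposreal 1 Rlt_0_1). intros x Hx Hx0.
    change (Rabs (x - 0) < 1) in Hx. rewrite Rminus_0_r, Rabs_pos_eq in Hx by lra.
    change (L <= ln_Gamma_pair n x / x ^ 2 <= L / (1 - x ^ 2)).
    destruct (ln_Gamma_pair_bounds n x ltac:(lra)) as [Hlow Hup].
    assert (Hx2 : x ^ 2 > 0) by nra.
    split; [apply Rle_div_r | apply Rle_div_l]; try exact Hx2; fold L in Hlow, Hup; lra.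
  - apply filterlim_const.
  - apply filterlim_div_1_sub_sqr.
Qed.
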